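(* Let $x_s<x_t$ be integers, let $C\ge 0$, and let $f:[x_s,x_t]\to\mathbb{R}$ be such that $([x_s,x_t],f)$ is an Ameso($C$) pair. Suppose there exist $x^0\in[x_s,x_t]$ and a positive integer $b$ with $[x^0,x^0+b]\subseteq[x_s,x_t]$ such that $f(x^0)=\min_{y\in[x_s,x^0+b]}f(y)$ and $f(x^0)+C\le \max_{y\in[x^0,x^0+b]}f(y)$. Then $f(x^0)=\min_{y\in[x_s,x_t]}f(y)$.
   Context: For integers $a\le b$, $[a,b]$ denotes the set of integers $\{a,a+1,\dots,b\}$ (similarly $(a,b]$ and $[a,b)$ denote integer sets). Floors and ceilings of vectors are taken componentwise. A set $D^n\subseteq\mathbb{Z}^n$ is an Ameso set if $\lceil(\vec x+\vec y)/2\rceil,\lfloor(\vec x+\vec y)/2\rfloor\in D^n$ for all $\vec x,\vec y\in D^n$. For $C\ge 0$, $(D^n,f)$ is an Ameso($C$) pair if $D^n$ is an Ameso set, $f:D^n\to\mathbb{R}$ is bounded below, and $f(\vec x)+f(\vec y)+C\ge f(\lceil(\vec x+\vec y)/2\rceil)+f(\lfloor(\vec x+\vec y)/2\rfloor)$ for all $\vec x,\vec y\in D^n$. *)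

From Stdlib Require Import Reals ZArith Lra Lia.
Open Scope R_scope.

Definition Zint (a b : Z) : Z -> Prop := fun x => (a <= x <= b)%Z.

Definition zfloor_mid (x y : Z) : Z := Z.div (x + y) 2.
Definition zceil_mid (x y : Z) : Z := (- Z.div (- (x + y)) 2)%Z.

Definition Ameso_set (D : Z -> Prop) : Prop :=
  forall x y, D x -> D y -> D (zceil_mid x y) /\ D (zfloor_mid x y).

(* (D, f) is an Ameso(C) pair; f is given as a total function on Z, only its
   values on D are relevant. *)
Definition Ameso_pair (C : R) (D : Z -> Prop) (f : Z -> R) : Prop :=
  Ameso_set D /\
  (exists m : R, forall x, D x -> m <= f x) /\
  (forall x y, D x -> D y ->
     f x + f y + C >= f (zceil_mid x y) + f (zfloor_mid x y)).

(* Suppose some y > x0 + b had f y < f x0.  Restricted to [x0, y], f is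
   midpoint C-convex, and tilting it by the linear function that equalises its
   values at x0 and y shows, by reflecting a maximiser about the nearer
   endpoint, that f stays strictly below f x0 + C on (x0, y].  This contradicts
   the point of [x0, x0 + b] where f reaches f x0 + C (for z = x0 that point
   forces C = 0, and then x0 + 1 contradicts the minimality of f x0). *)

From Stdlib Require Import Reals ZArith Lra Lia.
Open Scope R_scope.

Definition midpoint_convex_on (C : R) (a c : Z) (h : Z -> R) : Prop :=
  forall u v w, (a <= u <= c)%Z -> (a <= v <= c)%Z -> (u + v = 2 * w)%Z ->
    2 * h w <= h u + h v + C.

Lemma Zinterval_argmax (h : Z -> R) (a c : Z) : (a <= c)%Z ->
  exists m, (a <= m <= c)%Z /\ forall v, (a <= v <= c)%Z -> h v <= h m.
Proof.
  intros Hac.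
  replace c with (a + Z.of_nat (Z.to_nat (c - a)))%Z by lia.
  induction (Z.to_nat (c - a)) as [|n [m [Hm Hmax]]].
  - exists a. split; [lia|]. intros v Hv. replace v with a by lia. lra.
  - set (t := (a + Z.of_nat (S n))%Z).
    assert (Hsplit : forall v, (a <= v <= t)%Z ->
              v = t \/ (a <= v <= a + Z.of_nat n)%Z) by (unfold t; lia).
    destruct (Rle_or_lt (h t) (h m)) as [Hle | Hlt].
    + exists m. split; [unfold t; lia|].
      intros v Hv. destruct (Hsplit v Hv) as [-> | Hv']; [lra | auto].
    + exists t. split; [unfold t; lia|].
      intros v Hv. destruct (Hsplit v Hv) as [-> | Hv']; [lra|].
      specialize (Hmax v Hv'). lra.
Qed.

Lemma midpoint_convex_le_max_ends (C : R) (a c : Z) (h : Z -> R) :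
  midpoint_convex_on C a c h ->
  forall w, (a <= w <= c)%Z -> h w <= Rmax (h a) (h c) + C.
Proof.
  intros Hconv w Hw.
  destruct (Zinterval_argmax h a c ltac:(lia)) as [m [Hm Hmax]].
  assert (Hwm : h w <= h m) by auto.
  (* reflect the maximiser m about the endpoint nearer to it *)
  destruct (Z_le_gt_dec (2 * m) (a + c)) as [Hnear | Hnear].
  - assert (Hmid := Hconv a (2 * m - a)%Z m ltac:(lia) ltac:(lia) ltac:(lia)).
    assert (h (2 * m - a)%Z <= h m) by (apply Hmax; lia).
    pose proof (Rmax_l (h a) (h c)). lra.
  - assert (Hmid := Hconv (2 * m - c)%Z c m ltac:(lia) ltac:(lia) ltac:(lia)).
    assert (h (2 * m - c)%Z <= h m) by (apply Hmax; lia).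
    pose proof (Rmax_r (h a) (h c)). lra.
Qed.

Lemma midpoint_convex_on_add_linear (C : R) (a c : Z) (h : Z -> R) (k : R) :
  midpoint_convex_on C a c h ->
  midpoint_convex_on C a c (fun w => h w + k * IZR w).
Proof.
  intros Hconv u v w Hu Hv E.
  assert (Elin : IZR u + IZR v = 2 * IZR w).
  { rewrite <- plus_IZR, E, mult_IZR. reflexivity. }
  specialize (Hconv u v w Hu Hv E). nra.
Qed.

Lemma midpoint_convex_le_chord (C : R) (a c : Z) (h : Z -> R) :
  (a < c)%Z -> midpoint_convex_on C a c h ->
  forall w, (a <= w <= c)%Z ->
    h w <= h a + (h c - h a) * IZR (w - a) / IZR (c - a) + C.
Proof.
  intros Hac Hconv w Hw.
  assert (Hlen : 0 < IZR (c - a)) by (apply IZR_lt; lia).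
  set (k := (h a - h c) / IZR (c - a)).
  assert (Htilt := midpoint_convex_le_max_ends C a c _
                     (midpoint_convex_on_add_linear C a c h k Hconv) w Hw).
  cbv beta in Htilt.
  assert (Hends : h c + k * IZR c = h a + k * IZR a).
  { unfold k. rewrite !minus_IZR in *. field. lra. }
  rewrite Hends, Rmax_left in Htilt by lra.
  replace ((h c - h a) * IZR (w - a) / IZR (c - a)) with (k * (IZR a - IZR w))
    by (unfold k; rewrite !minus_IZR in *; field; lra).
  lra.
Qed.

Lemma midpoint_convex_lt_start (C : R) (a c : Z) (h : Z -> R) :
  midpoint_convex_on C a c h -> h c < h a ->
  forall w, (a < w <= c)%Z -> h w < h a + C.
Proof.
  intros Hconv Hca w Hw.
  assert (Hchord := midpoint_convex_le_chord C a c h ltac:(lia) Hconv w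
                      ltac:(lia)).
  assert (Hlen : 0 < IZR (c - a)) by (apply IZR_lt; lia).
  assert (Hpos : 0 < IZR (w - a)) by (apply IZR_lt; lia).
  assert ((h c - h a) * IZR (w - a) / IZR (c - a) < 0).
  { apply Rdiv_neg_pos; [apply Rmult_neg_pos|]; lra. }
  lra.
Qed.

Lemma zmids_of_double (u v w : Z) : (u + v = 2 * w)%Z ->
  zceil_mid u v = w /\ zfloor_mid u v = w.
Proof.
  intros E. unfold zceil_mid, zfloor_mid. rewrite E.
  replace (- (2 * w))%Z with (- w * 2)%Z by lia.
  rewrite !Z.div_mul by lia. rewrite Z.mul_comm, Z.div_mul by lia. lia.
Qed.

Lemma Ameso_pair_midpoint_convex (C : R) (xs xt a c : Z) (f : Z -> R) :
  Ameso_pair C (Zint xs xt) f -> (xs <= a)%Z -> (c <= xt)%Z ->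
  midpoint_convex_on C a c f.
Proof.
  intros [_ [_ Hameso]] Ha Hc u v w Hu Hv E.
  destruct (zmids_of_double u v w E) as [Eceil Efloor].
  assert (H := Hameso u v ltac:(unfold Zint; lia) ltac:(unfold Zint; lia)).
  rewrite Eceil, Efloor in H. lra.
Qed.

Theorem theorem1 (xs xt : Z) (C : R) (f : Z -> R) (x0 b : Z) :
  (xs < xt)%Z -> 0 <= C ->
  Ameso_pair C (Zint xs xt) f ->
  Zint xs xt x0 -> (0 < b)%Z ->
  (forall y, Zint x0 (x0 + b) y -> Zint xs xt y) ->
  (* f(x0) = min over [xs, x0+b] *)
  (forall y, Zint xs (x0 + b) y -> f x0 <= f y) ->
  (* f(x0) + C <= max over [x0, x0+b] *)
  (exists y, Zint x0 (x0 + b) y /\ f x0 + C <= f y) ->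
  (* conclusion: f(x0) = min over [xs, xt] *)
  forall y, Zint xs xt y -> f x0 <= f y.
Proof.
  intros _ HC Hpair Hx0 Hb _ Hmin [z [Hz Hfz]] y Hy.
  unfold Zint in *.
  destruct (Z_le_gt_dec y (x0 + b)) as [Hyb | Hyb].
  { apply Hmin. unfold Zint. lia. }
  apply Rnot_lt_le. intros Hlt.
  assert (Hbelow : forall w, (x0 < w <= y)%Z -> f w < f x0 + C).
  { apply midpoint_convex_lt_start; [|exact Hlt].
    apply (Ameso_pair_midpoint_convex C xs xt); [exact Hpair | lia | lia]. }
  destruct (Z.eq_dec z x0) as [-> | Hz0].
  - assert (f (x0 + 1)%Z < f x0 + C) by (apply Hbelow; lia).
    assert (f x0 <= f (x0 + 1)%Z) by (apply Hmin; unfold Zint; lia).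
    lra.
  - assert (f z < f x0 + C) by (apply Hbelow; lia).
    lra.
Qed.
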